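(* Let $n\in\mathbb{N}$, $y_1,\dots,y_n\in\{-1,+1\}$, $z_1,\dots,z_n$ elements of a real Hilbert space $\mathcal{Z}$, $c_0\in\mathbb{R}^n_{\ge0}$, and let $(w^\star,b^\star,\xi^\star,\alpha^\star,\beta^\star)$ be a primal-dual optimal point of the WSVM problem with weights $c_0$. Let $\mathcal{W}$ be the family of equivalent weights defined below. Then there exists a weight vector $c'\in\mathcal{W}$ such that the WSVM problem with weights $c'$ has a primal-dual optimal point $(w^\star,b^\star,\xi^\star,\alpha',\beta')$ with $c'=\alpha'=\alpha^\star$ and $\beta'=0$.
   Context: For weights $c\in\mathbb{R}^n_{\ge0}$, the WSVM problem is $\min_{w\in\mathcal{Z},b\in\mathbb{R},\xi\in\mathbb{R}^n}\frac12\|w\|^2+\sum_i c_i\xi_i$ subject to $y_i(\langle w,z_i\rangle+b)\ge1-\xi_i$, $\xi_i\ge0$. A primal-dual optimal point $(w,b,\xi,\alpha,\beta)$ is one satisfying the KKT conditions: $w=\sum_i\alpha_iy_iz_i$; $\sum_i\alpha_iy_i=0$; $\alpha_i+\beta_i=c_i$; $\alpha_i[\xi_i-1+y_i(\langle w,z_i\rangle+b)]=0$; $\beta_i\xi_i=0$; $\xi_i-1+y_i(\langle w,z_i\rangle+b)\ge0$; $\alpha_i,\beta_i,\xi_i\ge0$. With $h_i=[1-y_i(\langle w^\star,z_i\rangle+b^\star)]_+$: $\mathcal{U}=\{\mu\in\mathbb{R}^n_{\ge0}:\sum_i\mu_iy_iz_i=w^\star,\ \sum_i\mu_iy_i=0,\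 \sum_i\mu_i=\sum_i\alpha^\star_i,\ \mu_i(\xi^\star_i-h_i)=0\ \forall i\}$, $\mathcal{V}=\{\nu\in\mathbb{R}^n_{\ge0}:\nu_i\xi^\star_i=0\ \forall i\}$, $\mathcal{W}=\{\mu+\nu:\mu\in\mathcal{U},\nu\in\mathcal{V}\}$. *)

From HB Require Import structures.
From mathcomp Require Import all_boot all_order all_algebra.
From mathcomp Require Import all_classical all_reals all_analysis.
Set Implicit Arguments. Unset Strict Implicit. Unset Printing Implicit Defensive.
Import Order.TTheory GRing.Theory Num.Theory.
Import numFieldNormedType.Exports.
Local Open Scope ring_scope.

Definition is_hilbert_inner (R : realType) (Z : completeNormedModType R)
  (ip : Z -> Z -> R) : Prop :=
  [/\ (forall x y, ip x y = ip y x),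
      (forall (a : R) x x' y, ip (a *: x + x') y = a * ip x y + ip x' y),
      (forall x, 0 <= ip x x),
      (forall x, ip x x = 0 -> x = 0)
    & (forall x, `|x| ^+ 2 = ip x x)].

Section WSVM.
Variables (R : realType) (Z : completeNormedModType R) (ip : Z -> Z -> R).
Variables (n : nat) (y : 'I_n -> R) (z : 'I_n -> Z).

(* Primal-dual optimal point of WSVM with weights c (KKT conditions). *)
Definition wsvm_pd_optimal (c : 'I_n -> R) (w : Z) (b : R)
  (xi alpha beta : 'I_n -> R) : Prop :=
  [/\ w = \sum_(i < n) (alpha i * y i) *: z i,
      \sum_(i < n) alpha i * y i = 0,
      (forall i, alpha i + beta i = c i) &
   [/\
      (forall i, alpha i * (xi i - 1 + y i * (ip w (z i) + b)) = 0),
      (forall i, beta i * xi i = 0),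
      (forall i, 0 <= xi i - 1 + y i * (ip w (z i) + b))
    & (forall i, [/\ 0 <= alpha i, 0 <= beta i & 0 <= xi i]) ] ].

Definition hinge (ws : Z) (bs : R) (i : 'I_n) : R :=
  Num.max 0 (1 - y i * (ip ws (z i) + bs)).

Definition in_U (ws : Z) (bs : R) (xis alphas : 'I_n -> R)
  (mu : 'I_n -> R) : Prop :=
  [/\ (forall i, 0 <= mu i),
      \sum_(i < n) (mu i * y i) *: z i = ws,
      \sum_(i < n) mu i * y i = 0,
      \sum_(i < n) mu i = \sum_(i < n) alphas i
    & (forall i, mu i * (xis i - hinge ws bs i) = 0)].

Definition in_V (xis : 'I_n -> R) (nu : 'I_n -> R) : Prop :=
  (forall i, 0 <= nu i) /\ (forall i, nu i * xis i = 0).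

Definition in_W (ws : Z) (bs : R) (xis alphas : 'I_n -> R)
  (c : 'I_n -> R) : Prop :=
  exists mu nu, [/\ in_U ws bs xis alphas mu, in_V xis nu
                  & c = (fun i => mu i + nu i)].
End WSVM.

(* The optimal dual variables alpha are themselves an admissible weight
   vector: they lie in U, because their complementary slackness against
   xi - 1 + y (<w, z> + b) transfers to xi - h (xi >= 0 forces xi = h wherever
   alpha is nonzero), and 0 lies in V.  Reweighting by c' = alpha keeps every
   KKT condition of the optimal point once beta' = 0. *)
From HB Require Import structures.
From mathcomp Require Import all_boot all_order all_algebra.
From mathcomp Require Import all_classical all_reals all_analysis.
From mathcomp Require Import ring.
Import Order.TTheory GRing.Theory Num.Theory.
Import numFieldNormedType.Exports.
Local Open Scope ring_scope.

Lemma mulr_subr_max0_eq0 (R : realDomainType) (a x g : R) :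
  0 <= x -> a * (x - g) = 0 -> a * (x - Num.max 0 g) = 0.
Proof.
move=> x_ge0 /eqP; rewrite mulf_eq0 => /orP[/eqP-> | ]; first by rewrite mul0r.
rewrite subr_eq0 => /eqP xg; subst x.
by rewrite max_r // subrr mulr0.
Qed.

Section EquivalentWeights.
Variables (R : realType) (Z : completeNormedModType R) (ip : Z -> Z -> R).
Variables (n : nat) (y : 'I_n -> R) (z : 'I_n -> Z).
Variables (c : 'I_n -> R) (w : Z) (b : R) (xi alpha beta : 'I_n -> R).
Hypothesis opt : wsvm_pd_optimal ip y z c w b xi alpha beta.

Lemma in_V0 : in_V xi (fun _ => 0).
Proof. by split=> i //; rewrite mul0r. Qed.

Lemma wsvm_dual_in_U : in_U ip y z w b xi alpha alpha.
Proof.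
case: opt => w_def sum_ay _ [compl _ _ nonneg].
split=> // [i | i]; first by case: (nonneg i).
- have [_ _ xi_ge0] := nonneg i.
  apply: mulr_subr_max0_eq0 => //.
  by rewrite -(compl i); congr (_ * _); rewrite opprB addrA; ring.
Qed.

Lemma wsvm_dual_in_W : in_W ip y z w b xi alpha alpha.
Proof.
exists alpha, (fun _ => 0); split; [exact: wsvm_dual_in_U | exact: in_V0 |].
by apply: funext => i; rewrite addr0.
Qed.

Lemma wsvm_pd_optimal_reweight :
  wsvm_pd_optimal ip y z alpha w b xi alpha (fun _ => 0).
Proof.
case: opt => w_def sum_ay _ [compl _ feas nonneg].
split=> // [i | ]; first by rewrite addr0.
split=> // [i | i]; first by rewrite mul0r.
by have [? ? ?] := nonneg i.
Qed.

End EquivalentWeights.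

Theorem corollary1 (R : realType) (Z : completeNormedModType R)
  (ip : Z -> Z -> R) (hip : is_hilbert_inner ip)
  (n : nat) (y : 'I_n -> R) (hy : forall i, y i = 1 \/ y i = -1)
  (z : 'I_n -> Z) (c0 : 'I_n -> R) (hc0 : forall i, 0 <= c0 i)
  (ws : Z) (bs : R) (xis alphas betas : 'I_n -> R)
  (hopt : wsvm_pd_optimal ip y z c0 ws bs xis alphas betas) :
  exists c' : 'I_n -> R,
    in_W ip y z ws bs xis alphas c' /\
    exists alpha' beta' : 'I_n -> R,
      [/\ wsvm_pd_optimal ip y z c' ws bs xis alpha' beta',
          c' = alpha', alpha' = alphas & beta' = (fun _ => 0)].
Proof.
exists alphas; split; first exact: wsvm_dual_in_W hopt.
exists alphas, (fun _ => 0); split=> //.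
exact: wsvm_pd_optimal_reweight hopt.
Qed.
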